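(* Let $P$ be a path producible by a tile assembly system $\mathcal T=(T,\sigma,1)$ such that the last glue of $P$ (the glue between $P_{|P|-2}$ and $P_{|P|-1}$) is visible from the north. Let $i,j\in\{0,1,\dots,|P|-2\}$. If the glues $\mathrm{glue}_P(i)$ and $\mathrm{glue}_P(j)$ are both visible from the south, $\mathrm{glue}_P(i)$ points east and $x_{P_i}<x_{P_j}$, then $i<j$ and $\mathrm{glue}_P(j)$ points east. Symmetrically, if both are visible from the south, $\mathrm{glue}_P(i)$ points west and $x_{P_i}>x_{P_j}$, then $i<j$ and $\mathrm{glue}_P(j)$ points west.
   Context: Abstract Tile Assembly Model (aTAM) at temperature 1: $T$ is a finite set of tile types (unit squares with a glue type and nonnegative strength on each side); a tile is a pair $((x,y),t)\in\mathbb Z^2\times T$; two adjacent tiles interact if their abutting glues have equal type and strength $\ge1$; a tile assembly system $\mathcal T=(T,\sigma,1)$ has a finite connected seed assembly $\sigma$, and producible assemblies are grown from $\sigma$ by repeatedly adding a single tile that interacts with at least one existing tile. A path is a sequence $P=P_0P_1\dots$ of tiles with pairwise distinct positions, consecutive ones adjacent and interacting; $x_{P_i},y_{P_i}$ are the coordinates of $P_i$. $P$ is producible if its tiles avoid the positions of $\sigma$, $\sigma\cup\{P_0,P_1,\dots\}$ is producible and $P_0$ interacts with a tile of $\sigma$. For $0\le i\le |P|-2$, $\mathrm{glue}_P(i)$ is the glue shared by $P_i$ and $P_{i+1}$; its type is the common glue type, its position is the midpoint of the segment from $\mathrm{pos}(P_i)$ to $\mathrm{pos}(P_{i+1})$;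 it points east, west, north or south according as $\mathrm{pos}(P_{i+1})-\mathrm{pos}(P_i)$ is $(1,0),(-1,0),(0,1),(0,-1)$. The embedding $\mathrm{emb}(P)$ is the polygonal curve through $\mathrm{pos}(P_0),\mathrm{pos}(P_1),\dots$ in order. A glue pointing east or west is visible from the south (resp. north) if the vertical ray starting at its position and going down (resp. up) intersects neither $\mathrm{emb}(P)$ nor $\sigma$ (i.e., neither a tile position of $\sigma$ nor a unit segment joining two adjacent tile positions of $\sigma$). *)

From Stdlib Require Import ZArith Reals List Permutation Relations.
Import ListNotations.

(** A glue is a pair (glue type, strength). *)
Definition glue : Type := (nat * nat)%type.
Definition glue_strength (g : glue) : nat := snd g.

Record tiletype : Type := TileType {
  gN : glue; gE : glue; gS : glue; gW : glue }.

Definition pos : Type := (Z * Z)%type.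
Definition tile : Type := (pos * tiletype)%type.

Definition tpos (a : tile) : pos := fst a.
Definition ttype (a : tile) : tiletype := snd a.

Definition adjacent (p q : pos) : Prop :=
  (fst q = (fst p + 1)%Z /\ snd q = snd p) \/
  (fst q = (fst p - 1)%Z /\ snd q = snd p) \/
  (fst q = fst p /\ snd q = (snd p + 1)%Z) \/
  (fst q = fst p /\ snd q = (snd p - 1)%Z).

Definition glues_match (g h : glue) : Prop := g = h /\ (1 <= glue_strength g)%nat.

Definition interact (a b : tile) : Prop :=
  let p := tpos a in let q := tpos b in
  let t := ttype a in let u := ttype b in
  (fst q = (fst p + 1)%Z /\ snd q = snd p /\ glues_match (gE t) (gW u)) \/
  (fst q = (fst p - 1)%Z /\ snd q = snd p /\ glues_match (gW t) (gE u)) \/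
  (fst q = fst p /\ snd q = (snd p + 1)%Z /\ glues_match (gN t) (gS u)) \/
  (fst q = fst p /\ snd q = (snd p - 1)%Z /\ glues_match (gS t) (gN u)).

Definition seed_ok (sigma : list tile) : Prop :=
  sigma <> [] /\ NoDup (map tpos sigma) /\
  forall a b, In a sigma -> In b sigma ->
    clos_refl_trans tile (fun u v => In u sigma /\ In v sigma /\ interact u v) a b.

(** Assemblies grown from the seed by single-tile attachments (the list
    records the assembly; the most recently attached tile is at the head). *)
Inductive grown (T : list tiletype) (sigma : list tile) : list tile -> Prop :=
| grown_seed : grown T sigma sigma
| grown_step : forall (A : list tile) (t : tile),
    grown T sigma A ->
    In (ttype t) T ->
    ~ In (tpos t) (map tpos A) ->
    (exists u, In u A /\ interact u t) ->
    grown T sigma (t :: A).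

Definition producible (T : list tiletype) (sigma : list tile) (A : list tile) : Prop :=
  exists L, grown T sigma L /\ Permutation L A.

Definition dummy_tile : tile := ((0%Z, 0%Z), TileType (0,0) (0,0) (0,0) (0,0)).
Definition tile_at (P : list tile) (i : nat) : tile := nth i P dummy_tile.
Definition pos_at (P : list tile) (i : nat) : pos := tpos (tile_at P i).
Definition x_at (P : list tile) (i : nat) : Z := fst (pos_at P i).
Definition y_at (P : list tile) (i : nat) : Z := snd (pos_at P i).

Definition is_path (P : list tile) : Prop :=
  NoDup (map tpos P) /\
  forall i, (S i < length P)%nat -> interact (tile_at P i) (tile_at P (S i)).

Definition producible_path (T : list tiletype) (sigma : list tile) (P : list tile) : Prop :=
  is_path P /\ P <> [] /\
  (forall t, In t P -> ~ In (tpos t) (map tpos sigma)) /\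
  producible T sigma (sigma ++ P) /\
  (exists u, In u sigma /\ interact u (tile_at P 0)).

(** Directions of glue_P(i) (between P_i and P_{i+1}). *)
Definition points_east (P : list tile) (i : nat) : Prop :=
  x_at P (S i) = (x_at P i + 1)%Z /\ y_at P (S i) = y_at P i.
Definition points_west (P : list tile) (i : nat) : Prop :=
  x_at P (S i) = (x_at P i - 1)%Z /\ y_at P (S i) = y_at P i.

Local Open Scope R_scope.

Definition point : Type := (R * R)%type.
Definition Rpos (p : pos) : point := (IZR (fst p), IZR (snd p)).

Definition on_segment (a b z : point) : Prop :=
  exists t : R, 0 <= t <= 1 /\
    fst z = fst a + t * (fst b - fst a) /\
    snd z = snd a + t * (snd b - snd a).

(** z lies on emb(P), the polygonal curve through pos(P_0), pos(P_1), ... *)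
Definition in_emb (P : list tile) (z : point) : Prop :=
  (exists k, (S k < length P)%nat /\
     on_segment (Rpos (pos_at P k)) (Rpos (pos_at P (S k))) z) \/
  (length P = 1%nat /\ z = Rpos (pos_at P 0)).

Definition in_seed (sigma : list tile) (z : point) : Prop :=
  (exists u, In u sigma /\ z = Rpos (tpos u)) \/
  (exists u v, In u sigma /\ In v sigma /\ adjacent (tpos u) (tpos v) /\
     on_segment (Rpos (tpos u)) (Rpos (tpos v)) z).

Definition glue_pos (P : list tile) (i : nat) : point :=
  ((fst (Rpos (pos_at P i)) + fst (Rpos (pos_at P (S i)))) / 2,
   (snd (Rpos (pos_at P i)) + snd (Rpos (pos_at P (S i)))) / 2).

(** glue_P(i) (pointing east or west) is visible from the south: the vertical
    ray starting at its position and going down (the starting point itself,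
    which lies on emb(P), excluded) meets neither emb(P) nor sigma. *)
Definition visible_from_south (sigma : list tile) (P : list tile) (i : nat) : Prop :=
  (points_east P i \/ points_west P i) /\
  forall s : R, 0 < s ->
    let z := (fst (glue_pos P i), snd (glue_pos P i) - s) in
    ~ in_emb P z /\ ~ in_seed sigma z.

Definition visible_from_north (sigma : list tile) (P : list tile) (i : nat) : Prop :=
  (points_east P i \/ points_west P i) /\
  forall s : R, 0 < s ->
    let z := (fst (glue_pos P i), snd (glue_pos P i) + s) in
    ~ in_emb P z /\ ~ in_seed sigma z.

(* Double all coordinates, so that the tiles and glue midpoints of P form a lattice walk with
   unit steps. For glues s < e visible from the south, the stretch of this walk from glue s to
   glue e, closed up by the downward vertical rays from the two midpoints, separates the plane:
   the parity of the crossings of an upward vertical ray with the stretch tells the two sides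
   apart, and it is constant along any lattice walk meeting neither the stretch nor the rays.
   If glue e pointed back towards glue s, the rest of P would start inside this curve. Being
   self-avoiding and never below a glue visible from the south, it stays inside; yet it ends
   with a glue visible from the north, whose upward ray crosses nothing. *)

From Stdlib Require Import ZArith Reals List Lia Lra Bool.

Open Scope Z_scope.

Lemma xorb_interchange a b c d : xorb (xorb a b) (xorb c d) = xorb (xorb a c) (xorb b d).
Proof. now destruct a, b, c, d. Qed.

Lemma xorb_telescope a b c : xorb (xorb a b) (xorb b c) = xorb a c.
Proof. now destruct a, b, c. Qed.

Definition strictly_above (p c : Z * Z) : bool := (fst p =? fst c) && (snd c <? snd p).

(* [crosses q a b]: the unit edge [a, b] meets the upward vertical ray from q + (1/2, 0). *)
Definition crosses (q a b : Z * Z) : bool :=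
  (snd a =? snd b) && (snd q <? snd a) &&
  (((fst a =? fst q) && (fst b =? fst q + 1)) || ((fst b =? fst q) && (fst a =? fst q + 1))).

Lemma strictly_above_lower p c c' : fst c' = fst c -> snd c' <= snd c ->
  strictly_above p c' = false -> strictly_above p c = false.
Proof.
  unfold strictly_above; intros -> Hle.
  destruct (Z.eqb (fst p) (fst c)); cbn; [|reflexivity].
  intros H; apply Z.ltb_ge in H; apply Z.ltb_ge; lia.
Qed.

Ltac pair_neq_split := repeat match goal with
  | H : (?a, ?b) <> (?c, ?d) |- _ =>
      assert (~ (a = c /\ b = d)) by (intros [? ?]; apply H; f_equal; assumption); clear H
  end.

Ltac decide_Z := unfold strictly_above, crosses; cbn [fst snd];
  repeat match goal with
  | |- context [Z.eqb ?a ?b] => destruct (Z.eqb_spec a b)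
  | |- context [Z.ltb ?a ?b] => destruct (Z.ltb_spec a b)
  end; cbn; intros; try reflexivity; try discriminate; exfalso; lia.

Lemma crosses_shift_right x y a b : adjacent a b ->
  a <> (x, y) -> a <> (x + 1, y) -> b <> (x, y) -> b <> (x + 1, y) ->
  xorb (crosses (x, y) a b) (crosses (x + 1, y) a b)
  = xorb (strictly_above a (x + 1, y)) (strictly_above b (x + 1, y)).
Proof.
  destruct a as [ax ay], b as [bx by']; unfold adjacent; cbn [fst snd].
  intros [[-> ->]|[[-> ->]|[[-> ->]|[-> ->]]]]; intros; pair_neq_split; decide_Z.
Qed.

Lemma crosses_shift_up x y a b : adjacent a b -> a <> (x, y + 1) -> b <> (x, y + 1) ->
  crosses (x, y) a b = crosses (x, y + 1) a b.
Proof.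
  destruct a as [ax ay], b as [bx by']; unfold adjacent; cbn [fst snd].
  intros [[-> ->]|[[-> ->]|[[-> ->]|[-> ->]]]]; intros; pair_neq_split; decide_Z.
Qed.

Lemma crosses_from_below x y a b : adjacent a b -> y < snd a -> y < snd b ->
  crosses (x, y) a b = xorb (x <? fst a) (x <? fst b).
Proof.
  destruct a as [ax ay], b as [bx by']; unfold adjacent; cbn [fst snd].
  intros [[-> ->]|[[-> ->]|[[-> ->]|[-> ->]]]]; intros; decide_Z.
Qed.

Lemma crosses_none q a b :
  strictly_above a q = false -> strictly_above b q = false -> crosses q a b = false.
Proof.
  destruct a as [ax ay], b as [bx by'], q as [x y]; decide_Z.
Qed.

Section Crossing_parity.
Variable g : nat -> Z * Z.

Fixpoint crossing_parity (q : Z * Z) (n : nat) : bool :=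
  match n with
  | O => false
  | S m => xorb (crossing_parity q m) (crosses q (g m) (g (S m)))
  end.

Definition unit_walk (n : nat) : Prop := forall k, (k < n)%nat -> adjacent (g k) (g (S k)).
Definition avoids (p : Z * Z) (n : nat) : Prop := forall k, (k <= n)%nat -> g k <> p.

Definition off_curve (n : nat) (p : Z * Z) : Prop :=
  avoids p n /\ strictly_above (g 0) p = false /\ strictly_above (g n) p = false.

Lemma avoids_strictly_below c p n :
  (forall k, (k <= n)%nat -> strictly_above c (g k) = false) ->
  strictly_above c p = true -> avoids p n.
Proof. intros Hc Hp k Hk E. rewrite <- E, Hc in Hp by exact Hk. discriminate. Qed.

Lemma parity_shift_right x y n : unit_walk n -> avoids (x, y) n -> avoids (x + 1, y) n ->
  xorb (crossing_parity (x, y) n) (crossing_parity (x + 1, y) n)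
  = xorb (strictly_above (g 0) (x + 1, y)) (strictly_above (g n) (x + 1, y)).
Proof.
  induction n as [|n IH]; intros U A A'; cbn [crossing_parity].
  - now rewrite !xorb_nilpotent.
  - rewrite xorb_interchange, IH by (intros k Hk; (apply U || apply A || apply A'); lia).
    rewrite crosses_shift_right by (apply U || apply A || apply A'; lia).
    apply xorb_telescope.
Qed.

Lemma parity_shift_up x y n : unit_walk n -> avoids (x, y + 1) n ->
  crossing_parity (x, y) n = crossing_parity (x, y + 1) n.
Proof.
  induction n as [|n IH]; intros U A; cbn [crossing_parity]; [reflexivity|].
  rewrite IH by (intros k Hk; (apply U || apply A); lia).
  rewrite crosses_shift_up by (apply U || apply A; lia).
  reflexivity.
Qed.

Lemma parity_from_below x y n : unit_walk n -> (forall k, (k <= n)%nat -> y < snd (g k)) ->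
  crossing_parity (x, y) n = xorb (x <? fst (g 0)) (x <? fst (g n)).
Proof.
  induction n as [|n IH]; intros U B; cbn [crossing_parity].
  - now rewrite xorb_nilpotent.
  - rewrite IH by (intros k Hk; (apply U || apply B); lia).
    rewrite crosses_from_below by (apply U || apply B; lia).
    apply xorb_telescope.
Qed.

Lemma parity_clear_above q n : (forall k, (k <= n)%nat -> strictly_above (g k) q = false) ->
  crossing_parity q n = false.
Proof.
  induction n as [|n IH]; intros C; cbn [crossing_parity]; [reflexivity|].
  rewrite IH, crosses_none by (intros; apply C; lia).
  reflexivity.
Qed.

Lemma parity_adjacent q q' n : unit_walk n -> adjacent q q' -> off_curve n q -> off_curve n q' ->
  crossing_parity q n = crossing_parity q' n.
Proof.
  intros U Hqq' [A [B0 Bn]] [A' [B0' Bn']].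
  destruct q as [x y], q' as [x' y']; unfold adjacent in Hqq'; cbn [fst snd] in Hqq'.
  destruct Hqq' as [[-> ->]|[[-> ->]|[[-> ->]|[-> ->]]]].
  - apply xorb_eq. now rewrite parity_shift_right, B0', Bn'.
  - replace (x, y) with (x - 1 + 1, y) in * by (f_equal; lia).
    symmetry; apply xorb_eq. now rewrite parity_shift_right, B0, Bn.
  - now apply parity_shift_up.
  - replace (x, y) with (x, y - 1 + 1) in * by (f_equal; lia).
    symmetry; now apply parity_shift_up.
Qed.

Lemma parity_along_walk (w : nat -> Z * Z) m n : unit_walk n ->
  (forall k, (k < m)%nat -> adjacent (w k) (w (S k))) ->
  (forall k, (k <= m)%nat -> off_curve n (w k)) ->
  crossing_parity (w 0%nat) n = crossing_parity (w m) n.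
Proof.
  intros U W O. induction m as [|m IH]; [reflexivity|].
  rewrite IH by (intros k Hk; (apply W || apply O); lia).
  apply parity_adjacent; auto.
Qed.

Lemma parity_column x y d n : unit_walk n -> 0 <= d ->
  (forall t, 0 < t <= d -> avoids (x, y + t) n) ->
  crossing_parity (x, y) n = crossing_parity (x, y + d) n.
Proof.
  intros U Hd. pattern d; apply natlike_ind; [| |exact Hd]; clear d Hd.
  - intros _. now rewrite Z.add_0_r.
  - intros d Hd IH A. rewrite IH by (intros t Ht; apply A; lia).
    rewrite Z.add_succ_r, <- Z.add_1_r.
    apply parity_shift_up; [exact U|]. rewrite <- Z.add_assoc. apply A; lia.
Qed.

Lemma walk_lower_bound n : exists y, forall k, (k <= n)%nat -> y < snd (g k).
Proof.
  induction n as [|n [y Hy]].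
  - exists (snd (g 0%nat) - 1). intros k Hk. replace k with 0%nat by lia. lia.
  - exists (Z.min y (snd (g (S n)) - 1)). intros k Hk.
    destruct (Nat.eq_dec k (S n)) as [->|Hne]; [lia|]. specialize (Hy k ltac:(lia)). lia.
Qed.

(* The point of the lattice next to the end of the walk, on the side of its start, is inside
   the curve: read the parity far below in the column of the end, then walk up that column,
   which the walk avoids, and step sideways. *)
Lemma parity_beside_end sg n : unit_walk n ->
  (forall k, (k <= n)%nat -> strictly_above (g n) (g k) = false) ->
  sg = 1 /\ fst (g n) < fst (g 0%nat) \/ sg = -1 /\ fst (g 0%nat) < fst (g n) ->
  fst (g 0%nat) <> fst (g n) + 1 ->
  avoids (fst (g n) + sg, snd (g n)) n -> avoids (fst (g n) + sg, snd (g n) - 1) n ->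
  crossing_parity (fst (g n) + sg, snd (g n)) n = true.
Proof.
  intros U Cn Hsg Hne A A1.
  set (mx := fst (g n)) in *; set (my := snd (g n)) in *; set (sx := fst (g 0%nat)) in *.
  assert (Below : forall t, t < my -> avoids (mx, t) n).
  { intros t Ht. apply (avoids_strictly_below (g n)); [exact Cn|]. unfold strictly_above.
    fold mx my. cbn [fst snd]. now rewrite Z.eqb_refl, (proj2 (Z.ltb_lt t my) Ht). }
  assert (Hcol : crossing_parity (mx, my - 1) n = (mx <? sx)).
  { destruct (walk_lower_bound n) as [y0 Hy0].
    assert (y0 < my) by (apply Hy0; lia).
    replace (my - 1) with (y0 + (my - 1 - y0)) by lia.
    rewrite <- parity_column; [| exact U | lia | intros t Ht; apply Below; lia].
    rewrite parity_from_below by assumption. fold sx mx.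
    now rewrite Z.ltb_irrefl, xorb_false_r. }
  replace my with (my - 1 + 1) at 1 by lia.
  rewrite <- parity_shift_up by (auto; now replace (my - 1 + 1) with my by lia).
  destruct Hsg as [[-> Hlt]|[-> Hlt]].
  - pose proof (parity_shift_right mx (my - 1) n U (Below (my - 1) ltac:(lia)) A1) as E.
    rewrite Hcol in E. unfold strictly_above in E; cbn [fst snd] in E; fold sx mx in E.
    destruct (Z.eqb_spec sx (mx + 1)), (Z.eqb_spec mx (mx + 1)), (Z.ltb_spec mx sx); try lia.
    destruct (crossing_parity (mx + 1, my - 1) n); easy.
  - replace (mx + -1) with (mx - 1) in * by lia.
    assert (A0 : avoids (mx - 1 + 1, my - 1) n)
      by (replace (mx - 1 + 1) with mx by lia; apply Below; lia).
    pose proof (parity_shift_right (mx - 1) (my - 1) n U A1 A0) as E.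
    replace (mx - 1 + 1) with mx in E by lia.
    rewrite Hcol in E. unfold strictly_above in E; cbn [fst snd] in E; fold sx mx my in E.
    destruct (Z.eqb_spec sx mx), (Z.ltb_spec (my - 1) my), (Z.ltb_spec mx sx); try lia.
    rewrite Z.eqb_refl in E. destruct (crossing_parity (mx - 1, my - 1) n); easy.
Qed.
End Crossing_parity.

Section Doubled_path.
Variable P : list tile.
Hypothesis HP : is_path P.
Hypothesis HP_two_tiles : (2 <= length P)%nat.

Local Notation X k := (x_at P k).
Local Notation Y k := (y_at P k).
Local Notation L := (length P - 1)%nat.

Lemma path_adjacent k : (k < L)%nat -> adjacent (X k, Y k) (X (S k), Y (S k)).
Proof.
  intros Hk. destruct HP as [_ H]. specialize (H k ltac:(lia)).
  unfold interact in H. unfold adjacent, x_at, y_at, pos_at; cbn [fst snd].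
  destruct H as [[A [B _]]|[[A [B _]]|[[A [B _]]|[A [B _]]]]]; lia.
Qed.

Lemma path_pos_inj k l : (k < length P)%nat -> (l < length P)%nat ->
  X k = X l -> Y k = Y l -> k = l.
Proof.
  intros Hk Hl Hx Hy. destruct HP as [ND _].
  apply (proj1 (NoDup_nth (map tpos P) (tpos dummy_tile)) ND); rewrite ?length_map; try lia.
  rewrite !map_nth. unfold x_at, y_at, pos_at, tile_at in *.
  now rewrite (surjective_pairing (tpos (nth k P _))), Hx, Hy, <- surjective_pairing.
Qed.

Definition glue_mid (k : nat) : Z * Z := (X k + X (S k), Y k + Y (S k)).

(* The path at twice the resolution: tile [k] sits at index [2 k], glue [k] at index [2 k + 1]. *)
Definition dpath (n : nat) : Z * Z :=
  (X (Nat.div2 n) + X (Nat.div2 (S n)), Y (Nat.div2 n) + Y (Nat.div2 (S n))).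

Lemma dpath_even k : dpath (2 * k) = (2 * X k, 2 * Y k).
Proof. unfold dpath. rewrite Nat.div2_double, Nat.div2_succ_double. f_equal; lia. Qed.

Lemma dpath_odd k : dpath (2 * k + 1) = glue_mid k.
Proof.
  unfold dpath. rewrite Nat.add_1_r, Nat.div2_succ_double.
  now replace (S (S (2 * k))) with (2 * S k)%nat by lia; rewrite Nat.div2_double.
Qed.

Lemma dpath_adjacent n : (n < 2 * L)%nat -> adjacent (dpath n) (dpath (S n)).
Proof.
  intros Hn. destruct (Nat.Even_or_Odd n) as [[k ->]|[k ->]].
  - replace (S (2 * k)) with (2 * k + 1)%nat by lia.
    pose proof (path_adjacent k ltac:(lia)) as A.
    rewrite dpath_even, dpath_odd. unfold adjacent, glue_mid in *; cbn [fst snd] in *. lia.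
  - replace (S (2 * k + 1)) with (2 * S k)%nat by lia.
    pose proof (path_adjacent k ltac:(lia)) as A.
    rewrite dpath_even, dpath_odd. unfold adjacent, glue_mid in *; cbn [fst snd] in *. lia.
Qed.

Lemma dpath_inj n m : (n <= 2 * L)%nat -> (m <= 2 * L)%nat -> dpath n = dpath m -> n = m.
Proof.
  intros Hn Hm E.
  destruct (Nat.Even_or_Odd n) as [[k ->]|[k ->]], (Nat.Even_or_Odd m) as [[l ->]|[l ->]];
    rewrite ?dpath_even, ?dpath_odd in E; unfold glue_mid in E;
    apply pair_equal_spec in E as [E1 E2].
  - now rewrite (path_pos_inj k l) by lia.
  - pose proof (path_adjacent l ltac:(lia)); unfold adjacent in *; cbn [fst snd] in *; lia.
  - pose proof (path_adjacent k ltac:(lia)); unfold adjacent in *; cbn [fst snd] in *; lia.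
  - pose proof (path_adjacent k ltac:(lia)) as Ak; pose proof (path_adjacent l ltac:(lia)) as Al.
    unfold adjacent in Ak, Al; cbn [fst snd] in Ak, Al.
    assert (C : X k = X l /\ Y k = Y l \/ X k = X (S l) /\ Y k = Y (S l)) by lia.
    destruct C as [[C1 C2]|[C1 C2]]; [now rewrite (path_pos_inj k l) by lia|].
    (* equal midpoints of glues [l] and [S l] would make tiles [l] and [S (S l)] coincide *)
    assert (k = S l) by (apply path_pos_inj; lia). subst k.
    assert (S (S l) = l); [apply path_pos_inj; lia | lia].
Qed.

Lemma dpath_vertical_mid m l d : (m <= 2 * L)%nat -> (l < length P)%nat -> (d = 1 \/ d = -1) ->
  dpath m = (2 * X l, 2 * Y l + d) ->
  exists k, m = (2 * k + 1)%nat /\ (k = l \/ S k = l) /\ X (S k) = X k.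
Proof.
  intros Hm Hl Hd E.
  destruct (Nat.Even_or_Odd m) as [[k ->]|[k ->]];
    rewrite ?dpath_even, ?dpath_odd in E; unfold glue_mid in E;
    apply pair_equal_spec in E as [E1 E2]; [lia|].
  exists k. pose proof (path_adjacent k ltac:(lia)) as A; unfold adjacent in A; cbn [fst snd] in A.
  split; [reflexivity|split; [|lia]].
  assert (C : X k = X l /\ Y k = Y l \/ X (S k) = X l /\ Y (S k) = Y l) by lia.
  destruct C as [[C1 C2]|[C1 C2]]; [left|right]; apply path_pos_inj; lia.
Qed.

Lemma dpath_in_emb n : (n <= 2 * L)%nat ->
  in_emb P (IZR (fst (dpath n)) / 2, IZR (snd (dpath n)) / 2)%R.
Proof.
  intros Hn. left. destruct (Nat.Even_or_Odd n) as [[k ->]|[k ->]].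
  - rewrite dpath_even; cbn [fst snd]; rewrite !mult_IZR.
    destruct (Nat.eq_dec k L) as [->|Hk].
    + exists (L - 1)%nat. replace (S (L - 1)) with L by lia.
      split; [lia|]. exists 1%R. unfold Rpos, x_at, y_at. cbn [fst snd]. lra.
    + exists k. split; [lia|]. exists 0%R. unfold Rpos, x_at, y_at. cbn [fst snd]. lra.
  - rewrite dpath_odd; unfold glue_mid; cbn [fst snd]; rewrite !plus_IZR.
    exists k. split; [lia|]. exists (1 / 2)%R. unfold Rpos, x_at, y_at. cbn [fst snd]. lra.
Qed.

Lemma glue_pos_half k :
  glue_pos P k = (IZR (fst (glue_mid k)) / 2, IZR (snd (glue_mid k)) / 2)%R.
Proof. unfold glue_pos, glue_mid. cbn [fst snd]. now rewrite !plus_IZR. Qed.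

Lemma south_visible_clear sigma k n : visible_from_south sigma P k -> (k < L)%nat ->
  (n <= 2 * L)%nat -> strictly_above (glue_mid k) (dpath n) = false.
Proof.
  intros [_ V] Hk Hn. unfold strictly_above.
  destruct (Z.eqb_spec (fst (glue_mid k)) (fst (dpath n))) as [Ex|]; [|reflexivity].
  destruct (Z.ltb_spec (snd (dpath n)) (snd (glue_mid k))) as [Ey|]; [exfalso|reflexivity].
  set (t := snd (glue_mid k) - snd (dpath n)).
  assert (Ht : (0 < IZR t / 2)%R) by (apply Rdiv_lt_0_compat; [apply IZR_lt; lia | lra]).
  destruct (V _ Ht) as [Hemb _]; apply Hemb.
  rewrite glue_pos_half; cbn [fst snd]. rewrite Ex.
  replace (IZR (snd (glue_mid k)) / 2 - IZR t / 2)%R with (IZR (snd (dpath n)) / 2)%R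
    by (unfold t; rewrite minus_IZR; lra).
  now apply dpath_in_emb.
Qed.

Lemma north_visible_clear sigma k n : visible_from_north sigma P k -> (k < L)%nat ->
  (n <= 2 * L)%nat -> strictly_above (dpath n) (glue_mid k) = false.
Proof.
  intros [_ V] Hk Hn. unfold strictly_above.
  destruct (Z.eqb_spec (fst (dpath n)) (fst (glue_mid k))) as [Ex|]; [|reflexivity].
  destruct (Z.ltb_spec (snd (glue_mid k)) (snd (dpath n))) as [Ey|]; [exfalso|reflexivity].
  set (t := snd (dpath n) - snd (glue_mid k)).
  assert (Ht : (0 < IZR t / 2)%R) by (apply Rdiv_lt_0_compat; [apply IZR_lt; lia | lra]).
  destruct (V _ Ht) as [Hemb _]; apply Hemb.
  rewrite glue_pos_half; cbn [fst snd]. rewrite <- Ex.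
  replace (IZR (snd (glue_mid k)) / 2 + IZR t / 2)%R with (IZR (snd (dpath n)) / 2)%R
    by (unfold t; rewrite minus_IZR; lra).
  now apply dpath_in_emb.
Qed.

Lemma glue_horizontal k : points_east P k \/ points_west P k ->
  (X (S k) = X k + 1 \/ X (S k) = X k - 1) /\ Y (S k) = Y k.
Proof. intros [[Hx Hy]|[Hx Hy]]; auto. Qed.

Lemma south_visible_mid_x_neq sigma i j : i <> j -> (i < L)%nat -> (j < L)%nat ->
  visible_from_south sigma P i -> visible_from_south sigma P j ->
  fst (glue_mid i) <> fst (glue_mid j).
Proof.
  intros Hij Hi Hj Vi Vj Ex.
  pose proof (south_visible_clear sigma i (2 * j + 1) Vi Hi ltac:(lia)) as Ci.
  pose proof (south_visible_clear sigma j (2 * i + 1) Vj Hj ltac:(lia)) as Cj.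
  rewrite dpath_odd in Ci, Cj. unfold strictly_above in Ci, Cj.
  rewrite Ex, Z.eqb_refl in Ci, Cj. apply Z.ltb_ge in Ci, Cj.
  apply Hij. enough (2 * i + 1 = 2 * j + 1)%nat by lia.
  apply dpath_inj; try lia. rewrite !dpath_odd. apply injective_projections; lia.
Qed.

Definition dpath_from (a k : nat) : Z * Z := dpath (a + k).

Section Pocket.
Variables (sigma : list tile) (s e : nat).
Hypotheses (Hse : (s < e)%nat) (HeL : (e < L)%nat).
Hypotheses (Vs : visible_from_south sigma P s) (Ve : visible_from_south sigma P e).
Hypothesis Vn : visible_from_north sigma P (L - 1).

Local Notation seg := (dpath_from (2 * s + 1)).
Local Notation len := (2 * (e - s))%nat.

Lemma seg_start : seg 0 = glue_mid s.
Proof. unfold dpath_from. now rewrite Nat.add_0_r, dpath_odd. Qed.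

Lemma seg_end : seg len = glue_mid e.
Proof.
  unfold dpath_from. replace (2 * s + 1 + len)%nat with (2 * e + 1)%nat by lia.
  apply dpath_odd.
Qed.

Lemma seg_walk : unit_walk seg len.
Proof.
  intros k Hk. unfold dpath_from.
  replace (2 * s + 1 + S k)%nat with (S (2 * s + 1 + k)) by lia. apply dpath_adjacent; lia.
Qed.

Lemma dpath_off_seg m : (2 * S e <= m <= 2 * L)%nat -> off_curve seg len (dpath m).
Proof.
  intros Hm. unfold off_curve. rewrite seg_start, seg_end.
  split; [|split; apply (south_visible_clear sigma); auto; lia].
  intros k Hk E. apply dpath_inj in E; lia.
Qed.

(* The continuation of the path after glue [e] starts inside the curve. *)
Lemma pocket_entry sg :
  sg = 1 /\ fst (glue_mid e) < fst (glue_mid s) \/ sg = -1 /\ fst (glue_mid s) < fst (glue_mid e) ->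
  X (S e) = X e + sg /\ Y (S e) = Y e ->
  crossing_parity seg (dpath (2 * S e)) len = true.
Proof.
  intros Hsg He_dir.
  destruct (glue_horizontal s (proj1 Vs)) as [Hs _].
  assert (Hstart : dpath (2 * S e) = (fst (seg len) + sg, snd (seg len))).
  { rewrite seg_end, dpath_even. unfold glue_mid; cbn [fst snd]. f_equal; lia. }
  rewrite Hstart. apply parity_beside_end.
  - exact seg_walk.
  - intros k Hk. rewrite seg_end. apply (south_visible_clear sigma); auto; lia.
  - now rewrite seg_start, seg_end.
  - rewrite seg_start, seg_end. unfold glue_mid; cbn [fst]. lia.
  - rewrite <- Hstart. apply dpath_off_seg; lia.
  - intros k Hk E. rewrite seg_end in E. unfold dpath_from, glue_mid in E; cbn [fst snd] in E.
    destruct (dpath_vertical_mid (2 * s + 1 + k) (S e) (-1)) as [k' [Hk' [Hl Hv]]]; try lia.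
    + rewrite E. f_equal; lia.
    + destruct Hl as [-> | [= ->]]; lia.
Qed.

Lemma pocket_walk :
  crossing_parity seg (dpath (2 * S e)) len = crossing_parity seg (dpath (2 * L)) len.
Proof.
  replace (dpath (2 * S e)) with (dpath_from (2 * S e) 0)
    by (unfold dpath_from; f_equal; lia).
  replace (dpath (2 * L)) with (dpath_from (2 * S e) (2 * L - 2 * S e))
    by (unfold dpath_from; f_equal; lia).
  apply parity_along_walk; [exact seg_walk | | ].
  - intros k Hk. unfold dpath_from.
    replace (2 * S e + S k)%nat with (S (2 * S e + k)) by lia. apply dpath_adjacent; lia.
  - intros k Hk. apply dpath_off_seg; lia.
Qed.

(* Just above the last glue, which is visible from the north, the curve is not crossed at all;
   that point is reached from the last tile by one step up and one step sideways. *)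
Lemma pocket_exit : crossing_parity seg (dpath (2 * L)) len = false.
Proof.
  destruct (glue_horizontal (L - 1) (proj1 Vn)) as [HL HLy].
  replace (S (L - 1)) with L in HL, HLy by lia.
  destruct (glue_horizontal s (proj1 Vs)) as [Hs _], (glue_horizontal e (proj1 Ve)) as [He _].
  set (top := (fst (glue_mid (L - 1)), snd (glue_mid (L - 1)) + 1)).
  assert (Top_clear : forall k, (k <= len)%nat -> strictly_above (seg k) top = false).
  { intros k Hk. apply (strictly_above_lower _ _ (glue_mid (L - 1)));
      unfold top; cbn [fst snd]; try lia.
    apply (north_visible_clear sigma); auto; lia. }
  assert (Hup : off_curve seg len (2 * X L, 2 * Y L + 1)).
  { unfold off_curve; rewrite seg_start, seg_end.
    split; [|split; unfold strictly_above, glue_mid; cbn [fst snd];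
             apply andb_false_intro1, Z.eqb_neq; lia].
    intros k Hk E. unfold dpath_from in E.
    destruct (dpath_vertical_mid (2 * s + 1 + k) L 1 ltac:(lia) ltac:(lia) ltac:(lia) E)
      as [k' [Hk' [Hl Hv]]].
    destruct Hl as [-> | Hl]; [lia|].
    replace (S k') with L in Hv by lia. replace k' with (L - 1)%nat in Hv by lia. lia. }
  assert (Htop : off_curve seg len top).
  { unfold off_curve; rewrite seg_start, seg_end. split.
    - intros k Hk E.
      assert (C : strictly_above (seg k) (glue_mid (L - 1)) = false)
        by (apply (north_visible_clear sigma); auto; lia).
      rewrite E in C. unfold strictly_above, top in C; cbn [fst snd] in C.
      rewrite Z.eqb_refl in C. apply Z.ltb_ge in C. lia.
    - split; (apply (strictly_above_lower _ _ (dpath (2 * (L - 1) + 1)));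
        [rewrite dpath_odd; unfold top; cbn [fst snd]; lia ..
        | apply (south_visible_clear sigma); auto; lia]). }
  rewrite dpath_even, (parity_shift_up seg _ _ len seg_walk (proj1 Hup)).
  rewrite (parity_adjacent seg _ top len seg_walk); auto.
  - now apply parity_clear_above.
  - unfold adjacent, top, glue_mid; cbn [fst snd]. replace (S (L - 1)) with L by lia. lia.
Qed.
End Pocket.

Lemma no_pocket sigma s e sg : (s < e)%nat -> (e < L)%nat ->
  visible_from_south sigma P s -> visible_from_south sigma P e ->
  visible_from_north sigma P (L - 1) ->
  sg = 1 /\ fst (glue_mid e) < fst (glue_mid s) \/ sg = -1 /\ fst (glue_mid s) < fst (glue_mid e) ->
  ~ (X (S e) = X e + sg /\ Y (S e) = Y e).
Proof.
  intros Hse HeL Vs Ve Vn Hsg He_dir.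
  pose proof (pocket_entry sigma s e Hse HeL Vs Ve sg Hsg He_dir) as Entry.
  rewrite (pocket_walk sigma s e Hse HeL Vs Ve),
    (pocket_exit sigma s e Hse HeL Vs Ve Vn) in Entry.
  discriminate.
Qed.

Lemma visible_glue_order sigma sg i j : visible_from_north sigma P (L - 1) ->
  (i < L)%nat -> (j < L)%nat -> visible_from_south sigma P i -> visible_from_south sigma P j ->
  (sg = 1 \/ sg = -1) -> X (S i) = X i + sg -> 0 < sg * (X j - X i) ->
  (i < j)%nat /\ X (S j) = X j + sg.
Proof.
  intros Vn Hi Hj Vi Vj Hsg Hdir Hx.
  destruct (glue_horizontal i (proj1 Vi)) as [_ Hyi], (glue_horizontal j (proj1 Vj)) as [Hxj Hyj].
  assert (Hij : i <> j) by (intros ->; lia).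
  pose proof (south_visible_mid_x_neq sigma i j Hij Hi Hj Vi Vj) as Hmid.
  unfold glue_mid in Hmid; cbn [fst] in Hmid.
  destruct (Nat.lt_total i j) as [Hlt | [Heq | Hgt]]; [| contradiction |].
  - split; [exact Hlt|]. destruct (Z.eq_dec (X (S j)) (X j + sg)) as [|Hne]; [assumption|].
    exfalso. apply (no_pocket sigma i j (- sg)); auto; unfold glue_mid; cbn [fst]; lia.
  - exfalso. apply (no_pocket sigma j i sg); auto; unfold glue_mid; cbn [fst]; lia.
Qed.
End Doubled_path.

Theorem mainTheorem2 :
  forall (T : list tiletype) (sigma : list tile) (P : list tile),
    seed_ok sigma ->
    producible_path T sigma P ->
    (2 <= length P)%nat ->
    visible_from_north sigma P (length P - 2) ->
    forall i j : nat,
      (i <= length P - 2)%nat -> (j <= length P - 2)%nat ->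
      visible_from_south sigma P i -> visible_from_south sigma P j ->
      (points_east P i -> (x_at P i < x_at P j)%Z ->
         (i < j)%nat /\ points_east P j) /\
      (points_west P i -> (x_at P i > x_at P j)%Z ->
         (i < j)%nat /\ points_west P j).
Proof.
  intros T sigma P _ [Hpath _] Hlen Vn i j Hi Hj Vi Vj.
  replace (length P - 2)%nat with (length P - 1 - 1)%nat in Vn by lia.
  pose proof (proj2 (glue_horizontal P j (proj1 Vj))) as Hyj.
  split; intros [Hxi _] Hx.
  - destruct (visible_glue_order P Hpath Hlen sigma 1 i j) as [Hij Hxj]; try lia; auto.
    split; [exact Hij|]. split; [lia | exact Hyj].
  - destruct (visible_glue_order P Hpath Hlen sigma (-1) i j) as [Hij Hxj]; try lia; auto.
    split; [exact Hij|]. split; [lia | exact Hyj].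
Qed.
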